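(* Let $A=(a_{kl})$ be an $n\times n$ matrix with entries in $\{0,1,2,\dots\}\cup\{\infty\}$ and no zeros on the diagonal. Let $i\neq j$ be indices with $a_{ji}\neq 0$. Let $A'$ be obtained from $A$ by replacing column $i$ with $(a_{1i}+a_{1j},\dots,a_{ni}+a_{nj})^T$ and then subtracting $1$ from the $(j,i)$ entry, so that the new $(j,i)$ entry is $a_{ji}+a_{jj}-1$. All other columns are unchanged. Then $A\sim_M A'$. Moreover: - $A'$ has no zeros on the diagonal; - if $A$ is irreducible, so is $A'$; - if the top-left $m\times m$ corner of $A$ is irreducible, so is the top-left $m\times m$ corner of $A'$.
   Context: Arithmetic conventions: $\infty+a=\infty$ and $\infty-1=\infty$. For a finite index set $X$ and an $X\times X$ matrix $A$ with entries in $\{0,1,2,\dots\}\cup\{\infty\}$, $G_A$ is the graph with vertex set $X$ and exactly $A(x,y)$ edges from $x$ to $y$. A matrix $A$ is irreducible if $G_A$ is strongly connected. For matrices, $A\sim_M B$ means $G_A\sim_M G_B$. A graph $G=(G^0,G^1,r,s)$ may have multiple edges and loops. A source receives no edges, a sink emits no edges, and an infinite emitter emits infinitely many edges. A vertex is singular if it is a sink or infinite emitter, and regular otherwise. Move-equivalence $\sim_M$ is the smallest equivalence relation on graphs with finitely many vertices such that $G\sim_M E$ whenever $E$ is isomorphic to a graph obtained from $G$ by one of the following moves. (S) Delete a regular source together with the edges it emits. (R) For a regular vertex $u$ emitting exactly one edge $f$, with $r(f)\neq u$, and all of whose incoming edges have the same source $v$: delete $u$, $f$ and the edges into $u$, and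 add for each $e\in r^{-1}(u)$ an edge $[ef]$ from $v$ to $r(f)$. (O) Out-splitting at a non-sink $v$ along a partition $\mathcal E_1,\dots,\mathcal E_n$ of $s^{-1}(v)$ with at most one infinite part. Replace $v$ by $v^1,\dots,v^n$. Each edge $e$ into $v$ becomes copies $e^1,\dots,e^n$ with $r(e^i)=v^i$ and source $s(e)$, or source $v^j$ if $s(e)=v$ and $e\in\mathcal E_j$. An edge from $v$ to $w\neq v$ lying in $\mathcal E_i$ gets source $v^i$. (I) In-splitting at a regular non-source $v$ along a partition $\mathcal E_1,\dots,\mathcal E_n$ of $r^{-1}(v)$. Replace $v$ by $v^1,\dots,v^n$. Each edge $e$ out of $v$ becomes copies $e^1,\dots,e^n$ with $s(e^i)=v^i$ and range $r(e)$, or range $v^j$ if $r(e)=v$ and $e\in\mathcal E_j$. An edge into $v$ from $w\neq v$ lying in $\mathcal E_i$ gets range $v^i$. *)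

From HB Require Import structures.
From mathcomp Require Import all_boot.
From Stdlib Require Import Relations.Relation_Operators.
From Stdlib Require List.

Set Implicit Arguments.
Unset Strict Implicit.
Unset Printing Implicit Defensive.

Record graph : Type := Graph {
  gV : finType;
  gE : Type;
  src : gE -> gV;
  rng : gE -> gV }.
Arguments src {g} _.
Arguments rng {g} _.

Definition is_sink (G : graph) (v : gV G) := forall e : gE G, src e <> v.
Definition is_source (G : graph) (v : gV G) := forall e : gE G, rng e <> v.
Definition fin_emits (G : graph) (v : gV G) :=
  exists l : list (gE G), forall e, src e = v -> List.In e l.
Definition regular (G : graph) (v : gV G) := ~ is_sink v /\ fin_emits v.

(* A "presented" graph: vertices = {w : pW | pP w}, edges pY, with maps into pW. *)
Record pres : Type := Pres {
  pW : finType;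
  pP : pred pW;
  pY : Type;
  psrc : pY -> pW;
  prng : pY -> pW }.
Arguments pP : clear implicits.
Arguments psrc {p} _.
Arguments prng {p} _.

Definition iso_pres (E : graph) (X : pres) :=
  exists (f0 : pW X -> gV E) (f1 : pY X -> gE E),
    (forall y, pP X (psrc y) && pP X (prng y)) /\
    (forall w1 w2, pP X w1 -> pP X w2 -> f0 w1 = f0 w2 -> w1 = w2) /\
    (forall x : gV E, exists2 w, pP X w & f0 w = x) /\
    bijective f1 /\
    (forall y, src (f1 y) = f0 (psrc y)) /\
    (forall y, rng (f1 y) = f0 (prng y)).

Definition del_pres (G : graph) (v : gV G) : pres :=
  @Pres (gV G) (fun x => x != v)
    {e : gE G | (src e != v) && (rng e != v)}
    (fun e => src (proj1_sig e)) (fun e => rng (proj1_sig e)).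

(* (R): delete u, f and edges into u; add [ef] from s(e) (= v) to r(f). *)
Definition R_pres (G : graph) (u : gV G) (f : gE G) : pres :=
  @Pres (gV G) (fun x => x != u)
    ({e : gE G | (src e != u) && (rng e != u)} + {e : gE G | rng e == u})%type
    (fun y => match y with inl e => src (proj1_sig e) | inr e => src (proj1_sig e) end)
    (fun y => match y with inl e => rng (proj1_sig e) | inr _ => rng f end).

Definition osplit_pres (G : graph) (v : gV G) (n : nat) (p : gE G -> 'I_n) : pres :=
  let smap (e : gE G) : (gV G + 'I_n)%type :=
    if src e == v then inr (p e) else inl (src e) in
  @Pres (gV G + 'I_n)%type
    (fun w => match w with inl x => x != v | inr _ => true end)
    ({e : gE G | rng e != v} + ({e : gE G | rng e == v} * 'I_n))%type
    (fun y => match y with inl e => smap (proj1_sig e)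
                         | inr (e, _) => smap (proj1_sig e) end)
    (fun y => match y with inl e => inl (rng (proj1_sig e))
                         | inr (_, i) => inr i end).

Definition isplit_pres (G : graph) (v : gV G) (n : nat) (q : gE G -> 'I_n) : pres :=
  let rmap (e : gE G) : (gV G + 'I_n)%type :=
    if rng e == v then inr (q e) else inl (rng e) in
  @Pres (gV G + 'I_n)%type
    (fun w => match w with inl x => x != v | inr _ => true end)
    ({e : gE G | src e != v} + ({e : gE G | src e == v} * 'I_n))%type
    (fun y => match y with inl e => inl (src (proj1_sig e))
                         | inr (_, i) => inr i end)
    (fun y => match y with inl e => rmap (proj1_sig e)
                         | inr (e, _) => rmap (proj1_sig e) end).

(* p : gE G -> 'I_n restricted to S is a partition of S into n nonempty parts *)
Definition part_nonempty (G : graph) (S : gE G -> Prop) (n : nat) (p : gE G -> 'I_n) :=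
  forall i : 'I_n, exists e, S e /\ p e = i.
Definition part_finite (G : graph) (S : gE G -> Prop) (n : nat) (p : gE G -> 'I_n)
  (i : 'I_n) := exists l : list (gE G), forall e, S e -> p e = i -> List.In e l.
Definition at_most_one_infinite (G : graph) (S : gE G -> Prop) (n : nat)
  (p : gE G -> 'I_n) :=
  forall i j : 'I_n, i <> j -> part_finite S p i \/ part_finite S p j.

Definition moveS (G E : graph) :=
  exists v : gV G, regular v /\ is_source v /\ iso_pres E (del_pres v).

Definition moveR (G E : graph) :=
  exists (u : gV G) (f : gE G) (v : gV G),
    regular u /\ (forall e, src e = u <-> e = f) /\ rng f <> u /\
    (forall e, rng e = u -> src e = v) /\ iso_pres E (R_pres u f).

Definition moveO (G E : graph) :=
  exists (v : gV G) (n : nat) (p : gE G -> 'I_n),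
    ~ is_sink v /\
    part_nonempty (fun e => src e = v) p /\
    at_most_one_infinite (fun e => src e = v) p /\
    iso_pres E (osplit_pres v p).

Definition moveI (G E : graph) :=
  exists (v : gV G) (n : nat) (q : gE G -> 'I_n),
    regular v /\ ~ is_source v /\
    part_nonempty (fun e => rng e = v) q /\
    iso_pres E (isplit_pres v q).

Definition move (G E : graph) := moveS G E \/ moveR G E \/ moveO G E \/ moveI G E.

Definition move_equiv : graph -> graph -> Prop := clos_refl_sym_trans graph move.

Definition strongly_connected (G : graph) :=
  forall x y : gV G,
    clos_refl_trans (gV G) (fun a b => exists e : gE G, src e = a /\ rng e = b) x y.

Inductive enat := Fin of nat | Inf.

Definition eadd (a b : enat) : enat :=
  match a, b with Fin x, Fin y => Fin (x + y) | _, _ => Inf end.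
Definition esub1 (a : enat) : enat :=
  match a with Fin x => Fin x.-1 | Inf => Inf end.
Definition elt (k : nat) (a : enat) : bool :=
  match a with Fin x => k < x | Inf => true end.

(* G_A : exactly A x y edges from x to y (countably many if A x y = ∞) *)
Definition mgraph (n : nat) (A : 'I_n -> 'I_n -> enat) : graph :=
  @Graph 'I_n {t : 'I_n * 'I_n * nat | elt t.2 (A t.1.1 t.1.2)}
    (fun t => (proj1_sig t).1.1) (fun t => (proj1_sig t).1.2).

Definition mequiv (n m : nat) (A : 'I_n -> 'I_n -> enat) (B : 'I_m -> 'I_m -> enat) :=
  move_equiv (mgraph A) (mgraph B).

Definition irreducible (n : nat) (A : 'I_n -> 'I_n -> enat) :=
  strongly_connected (mgraph A).

Definition corner (n m : nat) (hm : m <= n) (A : 'I_n -> 'I_n -> enat) :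
  'I_m -> 'I_m -> enat :=
  fun k l => A (widen_ord hm k) (widen_ord hm l).

Definition col_add_move (n : nat) (A : 'I_n -> 'I_n -> enat) (i j : 'I_n) :
  'I_n -> 'I_n -> enat :=
  fun k l => if l == i then
               (if k == j then esub1 (eadd (A k i) (A k j)) else eadd (A k i) (A k j))
             else A k l.

(* Out-split [j], separating one edge [j -> i] from the other edges [j] emits: the new
   vertex emits only that edge and receives a copy of every edge into [j], while the
   remaining copy of [j] has one edge fewer to [i].  As long as the new vertex receives
   edges from two different vertices, in-split it to isolate the edges coming from one of
   them, [s], and remove the isolated copy by (R), which turns each edge [s -> j] into an
   edge [s -> i].  When a single source is left, a last (R) removes the new vertex; by then
   every [x] has gained [a_xj] edges to [i], which is exactly A'.  No nonzero entry becomes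
   zero, so a nonzero diagonal and irreducibility, also of corners, are preserved. *)

From mathcomp Require Import all_boot zify.
From Stdlib Require Import Relations.Relation_Operators ClassicalEpsilon.

Set Implicit Arguments.
Unset Strict Implicit.
Unset Printing Implicit Defensive.

(** * Cardinalities in {0,1,2,...} ∪ {∞} *)

Definition equipotent (T U : Type) := exists f : T -> U, bijective f.

Definition has_ecard (T : Type) (a : enat) := equipotent T {c : nat | elt c a}.

Lemma bijective_of_inj_surj (T U : Type) (f : T -> U) :
  injective f -> (forall u, exists t, f t = u) -> bijective f.
Proof.
move=> f_inj f_surj.
pose g u := proj1_sig (constructive_indefinite_description _ (f_surj u)).
exists g => [t|u]; rewrite /g; case: constructive_indefinite_description => //= t' ft'.
exact: f_inj.
Qed.

Lemma equipotent_sym T U : equipotent T U -> equipotent U T.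
Proof. by case=> f [g fK gK]; exists g; exists f. Qed.

Lemma equipotent_trans T U W : equipotent T U -> equipotent U W -> equipotent T W.
Proof.
case=> f [g fK gK] [h [k hK kK]]; exists (h \o f); exists (g \o k) => x /=.
  by rewrite hK fK.
by rewrite gK kK.
Qed.

Lemma equipotent_has_ecard T U a : equipotent T U -> has_ecard U a -> has_ecard T a.
Proof. exact: equipotent_trans. Qed.

Lemma has_ecard_eq T a b : has_ecard T a -> a = b -> has_ecard T b.
Proof. by move=> ? <-. Qed.

Lemma equipotent_sum T1 T2 U1 U2 :
  equipotent T1 U1 -> equipotent T2 U2 -> equipotent (T1 + T2) (U1 + U2).
Proof.
case=> f [g fK gK] [h [k hK kK]].
exists (fun z => match z with inl a => inl (f a) | inr b => inr (h b) end).
exists (fun z => match z with inl a => inl (g a) | inr b => inr (k b) end).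
  by case=> x /=; rewrite ?fK ?hK.
by case=> x /=; rewrite ?gK ?kK.
Qed.

Lemma equipotent_sumC T U : equipotent (T + U) (U + T).
Proof.
exists (fun z => match z with inl t => inr t | inr u => inl u end).
by exists (fun z => match z with inl u => inr u | inr t => inl t end) => [[]|[]].
Qed.

Lemma equipotent_sum_voidr T U : (U -> False) -> equipotent (T + U) T.
Proof.
move=> hU; exists (fun z => match z with inl t => t | inr u => match hU u with end end).
by exists inl => [[t|u]|t] //; case: (hU u).
Qed.

Lemma equipotent_sum_voidl T U : (T -> False) -> equipotent (T + U) U.
Proof. by move=> hT; apply: equipotent_trans (equipotent_sumC _ _) (equipotent_sum_voidr _ hT). Qed.

Lemma equipotent_elt_Fin_add x b :
  equipotent ({c | elt c (Fin x)} + {c | elt c b}) {c | elt c (eadd (Fin x) b)}.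
Proof.
have low c : c < x -> elt c (eadd (Fin x) b) by case: b => //= y; lia.
have high c : elt (x + c) (eadd (Fin x) b) = elt c b.
  by case: b {low} => //= y; rewrite ltn_add2l.
exists (fun z => match z with
                 | inl c => exist _ (val c) (low _ (valP c))
                 | inr c => exist _ (x + val c) (etrans (high _) (valP c)) end).
apply: bijective_of_inj_surj.
  case=> [[c hc]|[c hc]] [[d hd]|[d hd]] /= /(congr1 val) /= E.
  - by congr inl; apply: val_inj.
  - by move: hc; rewrite /= E; lia.
  - by move: hd; rewrite /= -E; lia.
  - by congr inr; apply: val_inj => /=; lia.
case=> c hc; case: (ltnP c x) => cx.
  by exists (inl (exist (fun c => elt c (Fin x)) c cx)); apply: val_inj.
have hb : elt (c - x) b by rewrite -high subnKC.
by exists (inr (exist (fun c => elt c b) _ hb)); apply: val_inj => /=; rewrite subnKC.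
Qed.

Lemma equipotent_elt_Inf_add :
  equipotent ({c | elt c Inf} + {c | elt c Inf}) {c | elt c Inf}.
Proof.
exists (fun z => match z with
                 | inl c => exist (fun c => elt c Inf) (val c).*2 isT
                 | inr c => exist (fun c => elt c Inf) (val c).*2.+1 isT end).
apply: bijective_of_inj_surj.
  case=> [[c hc]|[c hc]] [[d hd]|[d hd]] /= /(congr1 val) /= E.
  - by congr inl; apply: val_inj => /=; apply: double_inj.
  - by move: (congr1 odd E); rewrite /= !odd_double.
  - by move: (congr1 odd E); rewrite /= !odd_double.
  - by congr inr; apply: val_inj => /=; apply: double_inj; case: E.
case=> c hc; case c_odd: (odd c).
  exists (inr (exist (fun c => elt c Inf) c./2 isT)); apply: val_inj => /=.
  by rewrite -[RHS]odd_double_half c_odd.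
exists (inl (exist (fun c => elt c Inf) c./2 isT)); apply: val_inj => /=.
by rewrite -[RHS]odd_double_half c_odd.
Qed.

Lemma has_ecardD T U a b : has_ecard T a -> has_ecard U b -> has_ecard (T + U) (eadd a b).
Proof.
move=> hT hU; apply: equipotent_trans (equipotent_sum hT hU) _.
case: a {hT} => [x|]; first exact: equipotent_elt_Fin_add.
case: b {hU} => [y|]; last exact: equipotent_elt_Inf_add.
exact: equipotent_trans (equipotent_sumC _ _) (equipotent_elt_Fin_add y Inf).
Qed.

Lemma has_ecard0 T : (T -> False) -> has_ecard T (Fin 0).
Proof.
move=> hT; exists (fun t => match hT t with end).
have none : {c | elt c (Fin 0)} -> T by case=> c; rewrite /= ltn0.
exists none => [t|[c hc]]; first by case: (hT t).
by exfalso; move: hc; rewrite /= ltn0.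
Qed.

Lemma has_ecard1 T (t0 : T) : (forall t, t = t0) -> has_ecard T (Fin 1).
Proof.
move=> t0_unique; exists (fun _ => exist (fun c => elt c (Fin 1)) 0 isT).
exists (fun _ => t0) => [t|c]; first by rewrite (t0_unique t).
by apply: val_inj; case: c => [[|c] hc].
Qed.

Lemma has_ecardP T a : has_ecard T a <->
  exists v : T -> nat,
    [/\ injective v, forall t, elt (v t) a & forall d, elt d a -> exists t, v t = d].
Proof.
split.
  case=> g [h gK hK]; exists (fun t => sval (g t)); split.
  - by move=> t t' /val_inj /(can_inj gK).
  - by move=> t; case: (g t).
  - by move=> d hd; exists (h (exist _ d hd)); rewrite hK.
case=> v [v_inj v_elt v_surj]; exists (fun t => exist _ (v t) (v_elt t)).
apply: bijective_of_inj_surj; first by move=> t t' /(congr1 val) /= /v_inj.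
by case=> d hd; case: (v_surj d hd) => t vt; exists t; apply: val_inj.
Qed.

(* Renumber by closing the gap left at the index of [t0]. *)
Lemma has_ecard_rem1 (T : eqType) a (t0 : T) :
  has_ecard T a -> has_ecard {t : T | t != t0} (esub1 a).
Proof.
case/has_ecardP=> v [v_inj v_elt v_surj].
pose w (t : {t : T | t != t0}) := if v (val t) < v t0 then v (val t) else (v (val t)).-1.
have v_neq t : t != t0 -> v t != v t0 by apply: contra => /eqP /v_inj ->.
apply/has_ecardP; exists w; split.
- move=> [t ht] [t' ht'] /=; rewrite /w /=.
  have /eqP n1 := v_neq _ ht; have /eqP n2 := v_neq _ ht'.
  by move=> E; apply: val_inj => /=; apply: v_inj; move: E; do 2 case: ifP; lia.
- move=> [t ht]; rewrite /w /=; move: (v_elt t) (v_elt t0) (v_neq _ ht).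
  by case: a {v_surj v_elt} => [x|] //= h1 h2 /eqP h3; case: ifP; lia.
- move=> d hd; case: (ltnP d (v t0)) => d_lt.
    have hd' : elt d a by case: a v_elt {v_surj} hd => [x|] // v_elt _; apply: ltn_trans d_lt (v_elt t0).
    case: (v_surj d hd') => t vt.
    have t_neq : t != t0 by apply: contraTneq d_lt => E; rewrite -vt E ltnn.
    by exists (exist _ t t_neq); rewrite /w /= vt d_lt.
  have hd' : elt d.+1 a by case: a {v_surj v_elt} hd => [x|] //=; lia.
  case: (v_surj _ hd') => t vt.
  have t_neq : t != t0 by apply: contraTneq d_lt => E; rewrite -E vt -ltnNge.
  by exists (exist _ t t_neq); rewrite /w /= vt ltnNge ltnW.
Qed.

Lemma has_ecard_sig_const T (P : T -> bool) b a :
  (forall t, P t = b) -> has_ecard T a -> has_ecard {t | P t} (if b then a else Fin 0).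
Proof.
case: b => P_const hT; last by apply: has_ecard0; case=> t; rewrite P_const.
apply: equipotent_has_ecard hT; exists val; apply: bijective_of_inj_surj; first exact: val_inj.
by move=> t; exists (exist _ t (P_const t)).
Qed.

Lemma equipotent_sig_ext T (P Q : T -> bool) :
  P =1 Q -> equipotent {t | P t} {t | Q t}.
Proof.
move=> PQ; exists (fun t => exist Q (val t) (etrans (esym (PQ _)) (valP t))).
apply: bijective_of_inj_surj; first by move=> [t ?] [t' ?] /(congr1 val) /= E; apply: val_inj.
by case=> t ht; exists (exist _ t (etrans (PQ t) ht)); apply: val_inj.
Qed.

Lemma equipotent_sig_sum T1 T2 (P : T1 + T2 -> bool) :
  equipotent {z | P z} ({a | P (inl a)} + {b | P (inr b)}).
Proof.
pose F (z : {z | P z}) : ({a | P (inl a)} + {b | P (inr b)})%type :=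
  match z with exist (inl a) h => inl (exist (fun a => P (inl a)) a h)
             | exist (inr b) h => inr (exist (fun b => P (inr b)) b h) end.
exists F; apply: bijective_of_inj_surj.
  case=> [[a|a] ha] [[b|b] hb] //= E; apply: val_inj => /=.
    by move: (congr1 (fun z => if z is inl x then sval x else a) E) => /= ->.
  by move: (congr1 (fun z => if z is inr x then sval x else a) E) => /= ->.
by case=> [[a ha]|[b hb]]; [exists (exist _ (inl a) ha) | exists (exist _ (inr b) hb)].
Qed.

Lemma equipotent_sig_sig T (Q R : T -> bool) :
  equipotent {z : {e | Q e} | R (sval z)} {e | Q e && R e}.
Proof.
exists (fun z => exist _ (val (val z)) (introT andP (conj (valP (val z)) (valP z)))).
apply: bijective_of_inj_surj.
  by case=> [[e h1] h2] [[e' h1'] h2'] /= /(congr1 sval) /= E; do 2 apply: val_inj.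
case=> e h; case/andP: (h) => h1 h2; exists (exist _ (exist _ e h1) h2); exact: val_inj.
Qed.

Lemma equipotent_sig_pair T k (P : T -> bool) (a : 'I_k) :
  equipotent {z : T * 'I_k | P z.1 && (z.2 == a)} {e | P e}.
Proof.
exists (fun z : {z : T * 'I_k | P z.1 && (z.2 == a)} =>
          exist P (sval z).1 (proj1 (andP (valP z)))).
apply: bijective_of_inj_surj.
  case=> [[e b] h] [[e' b'] h'] /= /(congr1 sval) /= E; apply: val_inj => /=.
  by move: h h' => /andP [_ /eqP /= ->] /andP [_ /eqP /= ->]; rewrite E.
case=> e h; exists (exist _ (e, a) (introT andP (conj h (eqxx a)))); exact: val_inj.
Qed.

(** * Edge fibres of the moves *)

Definition edge_fiber (G : graph) (x y : gV G) :=
  {e : gE G | (src e == x) && (rng e == y)}.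

Definition pres_fiber (X : pres) (w1 w2 : pW X) :=
  {e : pY X | (psrc e == w1) && (prng e == w2)}.

Ltac case_eqs := rewrite /=; repeat (match goal with
   | |- context [if ?a == ?b then _ else _] =>
     let H := fresh "H" in case: (@eqP _ a b) => H;
     [try (injection H; clear H; intro H); try subst|]
   | |- context [?a == ?b] =>
     let H := fresh "H" in case: (@eqP _ a b) => H;
     [try (injection H; clear H; intro H); try subst|] end);
   rewrite /= ?andbT ?andbF //.

Section Fibers.
Variable G : graph.

Lemma R_pres_fiber (u : gV G) f w1 w2 : w1 != u -> w2 != u ->
  equipotent (@pres_fiber (R_pres u f) w1 w2)
    (edge_fiber w1 w2 + {e : edge_fiber w1 u | rng f == w2}).
Proof.
move=> h1 h2; apply: equipotent_trans (equipotent_sig_sum _) _; apply: equipotent_sum.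
  apply: equipotent_trans (@equipotent_sig_sig _ (fun e : gE G => (src e != u) && (rng e != u))
     (fun e => (src e == w1) && (rng e == w2))) _.
  by apply: equipotent_sig_ext => e; move: h1 h2; case_eqs.
apply: equipotent_trans (@equipotent_sig_sig _ (fun e : gE G => rng e == u)
     (fun e => (src e == w1) && (rng f == w2))) _.
apply: equipotent_sym.
apply: equipotent_trans (@equipotent_sig_sig _ (fun e : gE G => (src e == w1) && (rng e == u))
     (fun e => rng f == w2)) _.
by apply: equipotent_sig_ext => e; case_eqs.
Qed.

Variables (v : gV G) (k : nat).

Section InSplit.
Variable q : gE G -> 'I_k.
Let rmap (e : gE G) : (gV G + 'I_k)%type :=
  if rng e == v then inr (q e) else inl (rng e).

Lemma isplit_fiber_ll x y : x != v -> y != v ->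
  equipotent (@pres_fiber (isplit_pres v q) (inl x) (inl y)) (edge_fiber x y).
Proof.
move=> h1 h2; apply: equipotent_trans (equipotent_sig_sum _) _.
apply: equipotent_trans (equipotent_sum_voidr _ _) _; first by case=> [[[e he] i]].
apply: equipotent_trans (@equipotent_sig_sig _ (fun e : gE G => src e != v)
     (fun e => (inl (src e) == inl x :> (gV G + 'I_k)%type) && (rmap e == inl y))) _.
by apply: equipotent_sig_ext => e; rewrite /rmap; move: h1 h2; case_eqs.
Qed.

Lemma isplit_fiber_lr x a : x != v ->
  equipotent (@pres_fiber (isplit_pres v q) (inl x) (inr a))
    {e : edge_fiber x v | q (sval e) == a}.
Proof.
move=> h1; apply: equipotent_trans (equipotent_sig_sum _) _.
apply: equipotent_trans (equipotent_sum_voidr _ _) _; first by case=> [[[e he] i]].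
apply: equipotent_trans (@equipotent_sig_sig _ (fun e : gE G => src e != v)
     (fun e => (inl (src e) == inl x :> (gV G + 'I_k)%type) && (rmap e == inr a))) _.
apply: equipotent_sym.
apply: equipotent_trans (@equipotent_sig_sig _ (fun e : gE G => (src e == x) && (rng e == v))
     (fun e => q e == a)) _.
by apply: equipotent_sig_ext => e; rewrite /rmap; move: h1; case_eqs.
Qed.

Lemma isplit_fiber_rl a y : y != v ->
  equipotent (@pres_fiber (isplit_pres v q) (inr a) (inl y)) (edge_fiber v y).
Proof.
move=> h2; apply: equipotent_trans (equipotent_sig_sum _) _.
apply: equipotent_trans (equipotent_sum_voidl _ _) _; first by case=> [[e he]].
apply: (@equipotent_trans _ {z : ({e : gE G | src e == v} * 'I_k)%type |
   (rmap (sval z.1) == inl y) && (z.2 == a)}).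
  by apply: equipotent_sig_ext; case=> [[e he] i] /=; rewrite andbC.
apply: equipotent_trans (@equipotent_sig_pair _ k
     (fun e : {e : gE G | src e == v} => rmap (sval e) == inl y) a) _.
apply: equipotent_trans (@equipotent_sig_sig _ (fun e : gE G => src e == v)
     (fun e => rmap e == inl y)) _.
by apply: equipotent_sig_ext => e; rewrite /rmap; move: h2; case_eqs.
Qed.

Lemma isplit_fiber_rr a b :
  equipotent (@pres_fiber (isplit_pres v q) (inr a) (inr b))
    {e : edge_fiber v v | q (sval e) == b}.
Proof.
apply: equipotent_trans (equipotent_sig_sum _) _.
apply: equipotent_trans (equipotent_sum_voidl _ _) _; first by case=> [[e he]].
apply: (@equipotent_trans _ {z : ({e : gE G | src e == v} * 'I_k)%type |
   (rmap (sval z.1) == inr b) && (z.2 == a)}).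
  by apply: equipotent_sig_ext; case=> [[e he] i] /=; rewrite andbC.
apply: equipotent_trans (@equipotent_sig_pair _ k
     (fun e : {e : gE G | src e == v} => rmap (sval e) == inr b) a) _.
apply: equipotent_trans (@equipotent_sig_sig _ (fun e : gE G => src e == v)
     (fun e => rmap e == inr b)) _.
apply: equipotent_sym.
apply: equipotent_trans (@equipotent_sig_sig _ (fun e : gE G => (src e == v) && (rng e == v))
     (fun e => q e == b)) _.
by apply: equipotent_sig_ext => e; rewrite /rmap; case_eqs.
Qed.

End InSplit.

Section OutSplit.
Variable p : gE G -> 'I_k.
Let smap (e : gE G) : (gV G + 'I_k)%type :=
  if src e == v then inr (p e) else inl (src e).

Lemma osplit_fiber_ll x y : x != v -> y != v ->
  equipotent (@pres_fiber (osplit_pres v p) (inl x) (inl y)) (edge_fiber x y).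
Proof.
move=> h1 h2; apply: equipotent_trans (equipotent_sig_sum _) _.
apply: equipotent_trans (equipotent_sum_voidr _ _) _.
  by case=> [[[e he] i]] /=; rewrite andbF.
apply: equipotent_trans (@equipotent_sig_sig _ (fun e : gE G => rng e != v)
     (fun e => (smap e == inl x) && (inl (rng e) == inl y :> (gV G + 'I_k)%type))) _.
by apply: equipotent_sig_ext => e; rewrite /smap; move: h1 h2; case_eqs.
Qed.

Lemma osplit_fiber_lr x b : x != v ->
  equipotent (@pres_fiber (osplit_pres v p) (inl x) (inr b)) (edge_fiber x v).
Proof.
move=> h1; apply: equipotent_trans (equipotent_sig_sum _) _.
apply: equipotent_trans (equipotent_sum_voidl _ _) _.
  by case=> [[e he]] /=; rewrite andbF.
apply: (@equipotent_trans _ {z : ({e : gE G | rng e == v} * 'I_k)%type |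
   (smap (sval z.1) == inl x) && (z.2 == b)}).
  by apply: equipotent_sig_ext; case=> [[e he] i].
apply: equipotent_trans (@equipotent_sig_pair _ k
     (fun e : {e : gE G | rng e == v} => smap (sval e) == inl x) b) _.
apply: equipotent_trans (@equipotent_sig_sig _ (fun e : gE G => rng e == v)
     (fun e => smap e == inl x)) _.
by apply: equipotent_sig_ext => e; rewrite /smap; move: h1; case_eqs.
Qed.

Lemma osplit_fiber_rl a y : y != v ->
  equipotent (@pres_fiber (osplit_pres v p) (inr a) (inl y))
    {e : edge_fiber v y | p (sval e) == a}.
Proof.
move=> h2; apply: equipotent_trans (equipotent_sig_sum _) _.
apply: equipotent_trans (equipotent_sum_voidr _ _) _.
  by case=> [[[e he] i]] /=; rewrite andbF.
apply: equipotent_trans (@equipotent_sig_sig _ (fun e : gE G => rng e != v)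
     (fun e => (smap e == inr a) && (inl (rng e) == inl y :> (gV G + 'I_k)%type))) _.
apply: equipotent_sym.
apply: equipotent_trans (@equipotent_sig_sig _ (fun e : gE G => (src e == v) && (rng e == y))
     (fun e => p e == a)) _.
by apply: equipotent_sig_ext => e; rewrite /smap; move: h2; case_eqs.
Qed.

Lemma osplit_fiber_rr a b :
  equipotent (@pres_fiber (osplit_pres v p) (inr a) (inr b))
    {e : edge_fiber v v | p (sval e) == a}.
Proof.
apply: equipotent_trans (equipotent_sig_sum _) _.
apply: equipotent_trans (equipotent_sum_voidl _ _) _.
  by case=> [[e he]] /=; rewrite andbF.
apply: (@equipotent_trans _ {z : ({e : gE G | rng e == v} * 'I_k)%type |
   (smap (sval z.1) == inr a) && (z.2 == b)}).
  by apply: equipotent_sig_ext; case=> [[e he] i].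
apply: equipotent_trans (@equipotent_sig_pair _ k
     (fun e : {e : gE G | rng e == v} => smap (sval e) == inr a) b) _.
apply: equipotent_trans (@equipotent_sig_sig _ (fun e : gE G => rng e == v)
     (fun e => smap e == inr a)) _.
apply: equipotent_sym.
apply: equipotent_trans (@equipotent_sig_sig _ (fun e : gE G => (src e == v) && (rng e == v))
     (fun e => p e == a)) _.
by apply: equipotent_sig_ext => e; rewrite /smap; case_eqs.
Qed.

End OutSplit.

End Fibers.

Lemma R_pres_closed (G : graph) (u : gV G) f :
  (forall e, src e = u <-> e = f) -> rng f <> u ->
  forall y : pY (R_pres u f), pP (R_pres u f) (psrc y) && pP (R_pres u f) (prng y).
Proof.
move=> src_u rng_f [[e /= he]|[e /= he]] //=.
apply/andP; split; last exact/eqP.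
by apply/eqP => /src_u E; subst e; move/eqP: he.
Qed.

Lemma osplit_pres_closed (G : graph) (v : gV G) k (p : gE G -> 'I_k)
  (y : pY (osplit_pres v p)) :
  pP (osplit_pres v p) (psrc y) && pP (osplit_pres v p) (prng y).
Proof. by case: y => [[e he]|[[e he] a]] /=; case: ifP => //= /negbT ->. Qed.

Lemma isplit_pres_closed (G : graph) (v : gV G) k (q : gE G -> 'I_k)
  (y : pY (isplit_pres v q)) :
  pP (isplit_pres v q) (psrc y) && pP (isplit_pres v q) (prng y).
Proof. by case: y => [[e he]|[[e he] a]] /=; case: ifP => //= H; rewrite ?he ?H. Qed.

(** * Graphs of matrices *)

(* [mgraph] over an arbitrary finite vertex type: the intermediate graphs live on
   [option 'I_n] and [option (option 'I_n)]. *)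
Definition mxgraph (V : finType) (M : V -> V -> enat) : graph :=
  @Graph V {t : V * V * nat | elt t.2 (M t.1.1 t.1.2)}
    (fun t => (proj1_sig t).1.1) (fun t => (proj1_sig t).1.2).

Lemma elt0P a : reflect (a <> Fin 0) (elt 0 a).
Proof. by case: a => [[|x]|] /=; constructor. Qed.

Section MatrixGraph.
Variables (V : finType) (M : V -> V -> enat).

Definition mx_edge x y c (h : elt c (M x y)) : gE (mxgraph M) :=
  exist (fun t : V * V * nat => elt t.2 (M t.1.1 t.1.2)) (x, y, c) h.

Lemma mx_edge_exists x y : M x y <> Fin 0 -> exists e : gE (mxgraph M), src e = x /\ rng e = y.
Proof. by move=> h; exists (mx_edge (introT (elt0P _) h)). Qed.

Lemma mx_edge_neq0 (e : gE (mxgraph M)) : M (src e) (rng e) <> Fin 0.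
Proof. by case: e => [[[x y] c] /= h] E; rewrite E in h. Qed.

Lemma has_ecard_edge_fiber x y : has_ecard (@edge_fiber (mxgraph M) x y) (M x y).
Proof.
apply/has_ecardP; exists (fun e => (sval (sval e)).2); split.
- case=> [[[[x1 y1] c] h] hh] [[[[x2 y2] c'] h'] hh'] /= E.
  case/andP: (hh) => /= /eqP E1 /eqP E2; case/andP: (hh') => /= /eqP E3 /eqP E4.
  by apply: val_inj; apply: val_inj => /=; rewrite E1 E2 E3 E4 E.
- case=> [[[[x1 y1] c] h] hh]; case/andP: (hh) => /= /eqP E1 /eqP E2.
  by rewrite /= -E1 -E2.
- move=> d hd.
  by exists (exist (fun e : gE (mxgraph M) => (src e == x) && (rng e == y))
            (mx_edge hd) (introT andP (conj (eqxx x) (eqxx y)))).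
Qed.

(* The edge bijection is glued from classically chosen fibrewise bijections. *)
Lemma iso_pres_mxgraph (X : pres) (f0 : pW X -> V)
  (X_closed : forall y, pP X (psrc y) && pP X (prng y))
  (f0_inj : forall w1 w2, pP X w1 -> pP X w2 -> f0 w1 = f0 w2 -> w1 = w2)
  (f0_surj : forall x : V, exists2 w, pP X w & f0 w = x)
  (X_fiber : forall w1 w2, pP X w1 -> pP X w2 ->
     has_ecard (pres_fiber w1 w2) (M (f0 w1) (f0 w2))) :
  iso_pres (mxgraph M) X.
Proof.
have fiber_bij w1 w2 : exists g : pres_fiber w1 w2 -> {c | elt c (M (f0 w1) (f0 w2))},
    pP X w1 -> pP X w2 -> bijective g.
  case: (boolP (pP X w1 && pP X w2)) => [/andP [h1 h2]|H].
    by case: (X_fiber _ _ h1 h2) => g hg; exists g.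
  have F : pres_fiber w1 w2 -> False.
    by case=> y /andP [/eqP E1 /eqP E2]; move: (X_closed y); rewrite E1 E2 (negbTE H).
  by exists (fun z => match F z with end) => h1 h2; rewrite h1 h2 in H.
pose g w1 w2 := proj1_sig (constructive_indefinite_description _ (fiber_bij w1 w2)).
have g_bij w1 w2 : pP X w1 -> pP X w2 -> bijective (g w1 w2).
  by rewrite /g; case: constructive_indefinite_description.
pose f1 (y : pY X) : gE (mxgraph M) :=
  let c := g (psrc y) (prng y)
     (exist (fun e => (psrc e == psrc y) && (prng e == prng y)) y
        (introT andP (conj (eqxx (psrc y)) (eqxx (prng y))))) in
  mx_edge (valP c).
have f1E w1 w2 y (h : (psrc y == w1) && (prng y == w2)) :
    sval (f1 y) = (f0 w1, f0 w2, sval (g w1 w2 (exist _ y h))).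
  have /andP [/eqP E1 /eqP E2] := h; subst w1 w2.
  by rewrite /f1 /= (bool_irrelevance h (introT andP (conj (eqxx (psrc y)) (eqxx (prng y))))).
exists f0, f1; split; first exact: X_closed.
split; first exact: f0_inj. split; first exact: f0_surj.
split; last by split.
apply: bijective_of_inj_surj.
  move=> y y' E.
  have /andP [p1 p2] := X_closed y; have /andP [p1' p2'] := X_closed y'.
  have h : (psrc y == psrc y) && (prng y == prng y) by rewrite !eqxx.
  have E0 := f1E _ _ _ h.
  move: (E0); rewrite E /f1 /= => [[E1 E2 _]].
  have {}E1 := f0_inj _ _ p1' p1 E1; have {}E2 := f0_inj _ _ p2' p2 E2.
  have h' : (psrc y' == psrc y) && (prng y' == prng y) by rewrite E1 E2 !eqxx.
  rewrite E (f1E _ _ _ h') in E0; case: E0 => E3.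
  by have /(congr1 sval) := bij_inj (g_bij _ _ p1 p2) (val_inj E3).
case=> [[[x1 x2] c] hc].
case: (f0_surj x1) => w1 p1 E1; case: (f0_surj x2) => w2 p2 E2; subst x1 x2.
case: (g_bij _ _ p1 p2) => ginv gK Kg.
case Ez : (ginv (exist _ c hc)) => [y hy].
exists y; apply: val_inj.
change (sval (f1 y) = (f0 w1, f0 w2, c)); by rewrite (f1E _ _ _ hy) -Ez Kg.
Qed.

Section LoneEdge.
Variables (u w : V).
Hypothesis row_u : forall y, M u y = if y == w then Fin 1 else Fin 0.

Let lone_edge_elt : elt 0 (M u w). Proof. by rewrite row_u eqxx. Qed.
Definition lone_edge := mx_edge lone_edge_elt.

Lemma src_lone_edge (e : gE (mxgraph M)) : src e = u <-> e = lone_edge.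
Proof.
split; last by move=> ->.
case: e => [[[x y] c] /= h] E; subst x; apply: val_inj => /=.
by move: h; rewrite row_u; case: eqP => [->|] //=; case: c.
Qed.

Lemma lone_edge_regular : regular (u : gV (mxgraph M)).
Proof.
split; first by move=> u_sink; apply: (u_sink lone_edge).
by exists [:: lone_edge] => e /src_lone_edge ->; left.
Qed.

End LoneEdge.

End MatrixGraph.

Lemma strongly_connected_mono (V : finType) (M M' : V -> V -> enat) :
  (forall x y, M x y <> Fin 0 -> M' x y <> Fin 0) ->
  strongly_connected (mxgraph M) -> strongly_connected (mxgraph M').
Proof.
move=> supp_M sc x y; elim: (sc x y) => {x y} [x y [e [<- <-]]| x | x y z _ IH1 _ IH2].
- by apply/rt_step/(@mx_edge_exists _ M' _ _)/supp_M; apply: mx_edge_neq0.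
- exact: rt_refl.
- exact: rt_trans IH1 IH2.
Qed.

(** * The sequence of moves *)

Lemma eaddx0 a : eadd a (Fin 0) = a.
Proof. by case: a => //= x; rewrite addn0. Qed.

Lemma eadd_esub1l a b : a <> Fin 0 -> eadd (esub1 a) b = esub1 (eadd a b).
Proof. by case: a => // [[|x]] //; case: b. Qed.

Lemma ord2_cases (a : 'I_2) : a = ord0 \/ a = ord_max.
Proof. by case: a => [[|[|m]] h]; [left; apply: val_inj | right; apply: val_inj |]. Qed.

Lemma moveO_equiv G E : moveO G E -> move_equiv G E.
Proof. by move=> h; apply: rst_step; right; right; left. Qed.

Lemma moveI_equiv G E : moveI G E -> move_equiv G E.
Proof. by move=> h; apply: rst_step; right; right; right. Qed.

Lemma moveR_equiv G E : moveR G E -> move_equiv G E.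
Proof. by move=> h; apply: rst_step; right; left. Qed.

Section ColumnAddition.
Variables (n : nat) (A : 'I_n -> 'I_n -> enat) (i j : 'I_n).
Hypotheses (hij : i != j) (hji : A j i <> Fin 0) (hjj : A j j <> Fin 0).

Definition rest_col (x : 'I_n) := if x == j then esub1 (A j i) else A x i.

(* [None] is the copy of [j] emitting only one edge [j -> i]; the edges into it from the
   vertices of [S] have already been rerouted to [i]. *)
Definition pending_mx (S : {set 'I_n}) (X Y : option 'I_n) : enat :=
  match X, Y with
  | Some x, Some y =>
      if y == i then (if x \in S then eadd (rest_col x) (A x j) else rest_col x) else A x y
  | Some x, None => if x \in S then Fin 0 else A x j
  | None, Some y => if y == i then Fin 1 else Fin 0
  | None, None => Fin 0
  end.

Lemma pending_mx_row S (Y : option 'I_n) :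
  pending_mx S None Y = if Y == Some i then Fin 1 else Fin 0.
Proof. by case: Y. Qed.

Definition split_edge : gE (mxgraph A) := mx_edge (introT (elt0P _) hji).

Definition split_part (e : gE (mxgraph A)) : 'I_2 :=
  if e == split_edge then ord0 else ord_max.

Definition split_vertex (w : 'I_n + 'I_2) : option 'I_n :=
  match w with inl x => Some x | inr a => if a == ord0 then None else Some j end.

Lemma split_fiber_from_j (a : 'I_2) y :
  has_ecard {e : @edge_fiber (mxgraph A) j y | split_part (sval e) == a}
    (pending_mx set0 (split_vertex (inr a)) (Some y)).
Proof.
case: (y =P i) => [->|/eqP y_i].
  have e0_fiber : (src split_edge == j) && (rng split_edge == i) by rewrite !eqxx.
  pose e0 : @edge_fiber (mxgraph A) j i := exist _ split_edge e0_fiber.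
  case: (ord2_cases a) => ->.
    have e0_part : split_part (sval e0) == ord0 by rewrite /split_part eqxx.
    apply: has_ecard_eq (has_ecard1 (t0 := exist _ e0 e0_part) _) _; last by rewrite /= eqxx.
    move=> [t ht]; apply: val_inj; apply: val_inj => /=.
    by move: ht; rewrite /split_part; case: (sval t =P split_edge).
  apply: equipotent_has_ecard (equipotent_sig_ext (Q := fun t => t != e0) _) _.
    move=> t; rewrite /split_part; case: (sval t =P split_edge) => [E|E].
      by rewrite (_ : t = e0) ?eqxx //; exact: val_inj.
    by rewrite eqxx; apply/esym/eqP => E'; apply: E; rewrite E'.
  apply: has_ecard_eq (has_ecard_rem1 e0 (@has_ecard_edge_fiber _ A j i)) _.
  by rewrite /= in_set0 eqxx /rest_col eqxx.
have not_split (e : @edge_fiber (mxgraph A) j y) : split_part (sval e) = ord_max.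
  case: e => e /= /andP [_ /eqP rng_e]; rewrite /split_part; case: eqP => // E.
  by move: y_i; rewrite -rng_e E eqxx.
case: (ord2_cases a) => ->.
  apply: has_ecard_eq (has_ecard0 _) _; last by rewrite /= (negbTE y_i).
  by case=> e; rewrite not_split.
apply: has_ecard_eq (has_ecard_sig_const (b := true) _ (@has_ecard_edge_fiber _ A j y)) _.
  by move=> e; rewrite not_split.
by rewrite /= in_set0 (negbTE y_i).
Qed.

Lemma split_fiber_loop (a b : 'I_2) :
  has_ecard {e : @edge_fiber (mxgraph A) j j | split_part (sval e) == a}
    (pending_mx set0 (split_vertex (inr a)) (split_vertex (inr b))).
Proof.
have not_split (e : @edge_fiber (mxgraph A) j j) : split_part (sval e) = ord_max.
  case: e => e /= /andP [_ /eqP rng_e]; rewrite /split_part; case: eqP => // E.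
  by move: hij; rewrite -rng_e E eqxx.
have j_i : (j == i) = false by rewrite eq_sym (negbTE hij).
case: (ord2_cases a) => ->.
  apply: has_ecard_eq (has_ecard0 _) _; first by case=> e; rewrite not_split.
  by case: (ord2_cases b) => -> //=; rewrite j_i.
apply: has_ecard_eq (has_ecard_sig_const (b := true) _ (@has_ecard_edge_fiber _ A j j)) _.
  by move=> e; rewrite not_split.
by case: (ord2_cases b) => -> /=; rewrite ?in_set0 ?j_i.
Qed.

Lemma moveO_split : moveO (mxgraph A) (mxgraph (pending_mx set0)).
Proof.
exists j, 2, split_part; split.
  by case: (mx_edge_exists hjj) => e [src_e _] j_sink; apply: (j_sink e).
split.
  move=> a; case: (ord2_cases a) => ->; first by exists split_edge; rewrite /split_part eqxx.
  exists (mx_edge (introT (elt0P _) hjj)); split => //; rewrite /split_part; case: eqP => // E.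
  by have /= /eqP := congr1 (@rng (mxgraph A)) E; rewrite eq_sym (negbTE hij).
split.
  have split_part0_finite : part_finite (fun e : gE (mxgraph A) => src e = j) split_part ord0.
    by exists [:: split_edge] => e _; rewrite /split_part; case: eqP => [->|]; [left|].
  move=> a b ab; case: (ord2_cases a) => Ea; case: (ord2_cases b) => Eb; subst a b => //.
  - by left.
  - by right.
apply: (@iso_pres_mxgraph _ _ (@osplit_pres (mxgraph A) j 2 split_part) split_vertex
          (@osplit_pres_closed (mxgraph A) j 2 split_part)).
- case=> [x|a] [y|b] /=.
  + by move=> _ _ [] ->.
  + by move=> x_j _; case: eqP => // _ [] E; rewrite E eqxx in x_j.
  + by move=> _ y_j; case: eqP => // _ [] E; rewrite -E eqxx in y_j.
  + by move=> _ _; case: (ord2_cases a) => ->; case: (ord2_cases b) => -> //=.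
- case=> [x|]; last by exists (inr ord0).
  by case: (x =P j) => [->|/eqP x_j]; [exists (inr ord_max) | exists (inl x)].
- case=> [x|a] [y|b] /= x_j y_j.
  + apply: equipotent_has_ecard (osplit_fiber_ll split_part x_j y_j) _.
    apply: has_ecard_eq (@has_ecard_edge_fiber _ A x y) _.
    by rewrite /pending_mx in_set0 /rest_col (negbTE x_j); case: eqP => // ->.
  + apply: equipotent_has_ecard (osplit_fiber_lr split_part b x_j) _.
    apply: has_ecard_eq (@has_ecard_edge_fiber _ A x j) _.
    by case: (ord2_cases b) => -> /=; rewrite ?in_set0 // eq_sym (negbTE hij).
  + exact: equipotent_has_ecard (osplit_fiber_rl split_part a y_j) (split_fiber_from_j a y).
  + exact: equipotent_has_ecard (osplit_fiber_rr _ _ a b) (split_fiber_loop a b).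
Qed.

(* [None] now only receives the edges coming from [s]; [Some None] receives the others. *)
Definition isolate_mx (S : {set 'I_n}) (s : 'I_n) (X Y : option (option 'I_n)) : enat :=
  match X, Y with
  | Some (Some x), Some (Some y) => pending_mx S (Some x) (Some y)
  | Some (Some x), Some None => if x == s then Fin 0 else pending_mx S (Some x) None
  | Some (Some x), None => if x == s then pending_mx S (Some x) None else Fin 0
  | _, Some (Some y) => if y == i then Fin 1 else Fin 0
  | _, _ => Fin 0
  end.

Lemma isolate_mx_row S s (Y : option (option 'I_n)) :
  isolate_mx S s None Y = if Y == Some (Some i) then Fin 1 else Fin 0.
Proof. by case: Y => [[y|]|]. Qed.

Section Isolate.
Variables (S : {set 'I_n}) (s t : 'I_n).
Hypotheses (s_S : s \notin S) (hsj : A s j <> Fin 0) (t_S : t \notin S) (htj : A t j <> Fin 0)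
  (hts : t != s).

Definition isolate_part (e : gE (mxgraph (pending_mx S))) : 'I_2 :=
  if src e == Some s then ord0 else ord_max.

Definition isolate_vertex (w : (option 'I_n + 'I_2)%type) : option (option 'I_n) :=
  match w with inl X => Some X | inr a => if a == ord0 then None else Some None end.

Lemma isolate_fiber_to_pending x (b : 'I_2) :
  has_ecard {e : @edge_fiber (mxgraph (pending_mx S)) (Some x) None | isolate_part (sval e) == b}
    (isolate_mx S s (Some (Some x)) (isolate_vertex (inr b))).
Proof.
apply: has_ecard_eq (has_ecard_sig_const
   (b := if x == s then b == ord0 else b == ord_max) _
   (@has_ecard_edge_fiber _ (pending_mx S) (Some x) None)) _.
  move=> e; rewrite /isolate_part; case: e => e /= /andP [/eqP -> _].
  case: (x =P s) => [->|x_s]; rewrite ?eqxx //.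
  by rewrite (inj_eq (@Some_inj _)) (introF eqP x_s) eq_sym.
by case: (ord2_cases b) => ->; have [->|x_s] := eqVneq x s; rewrite /= ?eqxx ?(negbTE x_s).
Qed.

Lemma moveI_isolate : moveI (mxgraph (pending_mx S)) (mxgraph (isolate_mx S s)).
Proof.
have s_edge : pending_mx S (Some s) None <> Fin 0 by rewrite /= (negbTE s_S).
have t_edge : pending_mx S (Some t) None <> Fin 0 by rewrite /= (negbTE t_S).
exists None, 2, isolate_part; split; first exact: (lone_edge_regular (pending_mx_row S)).
split; first by case/mx_edge_exists: s_edge => e [_ rng_e] no_source; apply: (no_source e).
split.
  move=> a; case: (ord2_cases a) => ->.
    by case/mx_edge_exists: s_edge => e [src_e rng_e]; exists e; rewrite /isolate_part src_e eqxx.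
  case/mx_edge_exists: t_edge => e [src_e rng_e]; exists e; rewrite /isolate_part src_e.
  by split => //; case: eqP => // [[E]]; move: hts; rewrite E eqxx.
apply: (@iso_pres_mxgraph _ _ (@isplit_pres (mxgraph (pending_mx S)) None 2 isolate_part)
          isolate_vertex (@isplit_pres_closed (mxgraph (pending_mx S)) None 2 isolate_part)).
- case=> [X|a] [Y|b] /=.
  + by move=> _ _ [] ->.
  + by move=> X_None _; case: eqP => // _ [] E; rewrite E in X_None.
  + by move=> _ Y_None; case: eqP => // _ [] E; rewrite -E in Y_None.
  + by move=> _ _; case: (ord2_cases a) => ->; case: (ord2_cases b) => -> //=.
- case=> [[x|]|]; [by exists (inl (Some x)) | by exists (inr ord_max) | by exists (inr ord0)].
- case=> [X|a] [Y|b] /= X_None Y_None.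
  + apply: equipotent_has_ecard (isplit_fiber_ll isolate_part X_None Y_None) _.
    apply: has_ecard_eq (@has_ecard_edge_fiber _ (pending_mx S) X Y) _.
    by case: X X_None => // x; case: Y Y_None.
  + apply: equipotent_has_ecard (isplit_fiber_lr isolate_part b X_None) _.
    by case: X X_None => // x _; apply: isolate_fiber_to_pending.
  + apply: equipotent_has_ecard (isplit_fiber_rl isolate_part a Y_None) _.
    apply: has_ecard_eq (@has_ecard_edge_fiber _ (pending_mx S) None Y) _.
    by case: Y Y_None => // y _; case: (ord2_cases a) => -> //=.
  + apply: equipotent_has_ecard (@isplit_fiber_rr (mxgraph (pending_mx S)) None _ _ a b) _.
    apply: has_ecard_eq (has_ecard0 _) _.
      case=> [[e /andP [/eqP src_e /eqP rng_e]] _].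
      by have := @mx_edge_neq0 _ (pending_mx S) e; rewrite src_e rng_e.
    by case: (ord2_cases a) => ->; case: (ord2_cases b) => ->.
Qed.

Lemma moveR_absorb : moveR (mxgraph (isolate_mx S s)) (mxgraph (pending_mx (s |: S))).
Proof.
have row_None := isolate_mx_row S s.
exists None, (lone_edge row_None), (Some (Some s)).
have rng_lone : rng (lone_edge row_None) <> None by [].
split; first exact: (lone_edge_regular row_None).
split; first exact: src_lone_edge.
split; first exact: rng_lone.
split.
  move=> e rng_e; have := @mx_edge_neq0 _ (isolate_mx S s) e; rewrite rng_e.
  by case: (src e) => [[x|]|] //=; case: eqP => [->|].
apply: (@iso_pres_mxgraph _ _ (@R_pres (mxgraph (isolate_mx S s)) None (lone_edge row_None))
          (odflt None) (R_pres_closed (@src_lone_edge _ _ _ _ row_None) rng_lone)).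
- by case=> [X|] [Y|] //= _ _ ->.
- by move=> X; exists (Some X).
- case=> [X|] [Y|] //= _ _.
  apply: equipotent_has_ecard (@R_pres_fiber (mxgraph (isolate_mx S s)) None
     (lone_edge row_None) (Some X) (Some Y) isT isT) _.
  apply: has_ecard_eq (has_ecardD (@has_ecard_edge_fiber _ (isolate_mx S s) (Some X) (Some Y))
    (has_ecard_sig_const (b := Some (Some i) == Some Y) (fun _ => erefl)
       (@has_ecard_edge_fiber _ (isolate_mx S s) (Some X) None))) _.
  case: X => [x|]; case: Y => [y|] /=; rewrite ?(inj_eq (@Some_inj _)).
  + rewrite in_setU1; case: (x =P s) => [->|x_s] /=.
      rewrite (negbTE s_S); case: (y =P i) => [->|y_i] /=; first by rewrite eqxx.
      by rewrite eq_sym (introF eqP y_i) eaddx0.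
    case: (y =P i) => [->|y_i] /=; first by rewrite eqxx eaddx0.
    by rewrite eq_sym (introF eqP y_i) eaddx0.
  + by rewrite in_setU1 eaddx0; case: (x =P s) => [->|x_s].
  + by rewrite if_same eaddx0.
  + by [].
Qed.

End Isolate.

Lemma moveR_final S s0 : (forall x, pending_mx S (Some x) None <> Fin 0 -> x = s0) ->
  moveR (mxgraph (pending_mx S)) (mxgraph (col_add_move A i j)).
Proof.
move=> sole_source.
have row_None := pending_mx_row S.
exists None, (lone_edge row_None), (Some s0).
have rng_lone : rng (lone_edge row_None) <> None by [].
split; first exact: (lone_edge_regular row_None).
split; first exact: src_lone_edge.
split; first exact: rng_lone.
split.
  move=> e rng_e; have := @mx_edge_neq0 _ (pending_mx S) e; rewrite rng_e.
  by case: (src e) => [x|] //= /sole_source ->.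
apply: (@iso_pres_mxgraph _ _ (@R_pres (mxgraph (pending_mx S)) None (lone_edge row_None))
          (odflt i) (R_pres_closed (@src_lone_edge _ _ _ _ row_None) rng_lone)).
- by case=> [X|] [Y|] //= _ _ ->.
- by move=> X; exists (Some X).
- case=> [x|] [y|] //= _ _.
  apply: equipotent_has_ecard (@R_pres_fiber (mxgraph (pending_mx S)) None
     (lone_edge row_None) (Some x) (Some y) isT isT) _.
  apply: has_ecard_eq (has_ecardD (@has_ecard_edge_fiber _ (pending_mx S) (Some x) (Some y))
    (has_ecard_sig_const (b := Some i == Some y) (fun _ => erefl)
       (@has_ecard_edge_fiber _ (pending_mx S) (Some x) None))) _.
  rewrite /= /col_add_move; case: (y =P i) => [->|y_i] /=.
    rewrite eqxx /rest_col; case: (x =P j) => [->|x_j].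
      by case: (j \in S); rewrite ?eaddx0 eadd_esub1l.
    by case: (x \in S); rewrite ?eaddx0.
  by rewrite (inj_eq (@Some_inj _)) eq_sym (introF eqP y_i) eaddx0.
Qed.

Definition pending_sources (S : {set 'I_n}) := [set x | (x \notin S) && elt 0 (A x j)].

Lemma pending_mequiv S :
  move_equiv (mxgraph (pending_mx S)) (mxgraph (col_add_move A i j)).
Proof.
move: {2}#|pending_sources S| (leqnn #|pending_sources S|) => m.
elim: m S => [|m IH] S size_S.
  apply/moveR_equiv/(@moveR_final S i) => x /=; case: ifP => // x_S /elt0P Axj.
  have : x \in pending_sources S by rewrite inE x_S.
  by rewrite (card0_eq _) //; move: size_S; rewrite leqn0 => /eqP.
case: (leqP #|pending_sources S| 1) => [size_le1|].
  case: (pickP (mem (pending_sources S))) => [s0 s0_src|no_src].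
    apply/moveR_equiv/(@moveR_final S s0) => x /=; case: ifP => // x_S /elt0P Axj.
    have x_src : x \in pending_sources S by rewrite inE x_S.
    by move/card_le1_eqP: size_le1; apply.
  apply/moveR_equiv/(@moveR_final S i) => x /=; case: ifP => // x_S /elt0P Axj.
  by have := no_src x; rewrite /= inE x_S Axj.
case/card_gt1P => s [t [s_src t_src t_s]].
move: (s_src) (t_src); rewrite !inE => /andP [s_S /elt0P hsj] /andP [t_S /elt0P htj].
apply: rst_trans (moveI_equiv (moveI_isolate s_S hsj t_S htj _)) _; first by rewrite eq_sym.
apply: rst_trans (moveR_equiv (moveR_absorb s_S)) (IH _ _).
have : pending_sources (s |: S) \proper pending_sources S.
  apply/properP; split.
    by apply/subsetP => x; rewrite !inE negb_or => /andP [/andP [_ ->] ->].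
  by exists s => //; rewrite !inE eqxx.
by move/proper_card => lt_card; rewrite -ltnS; exact: leq_trans lt_card size_S.
Qed.

Lemma mequiv_col_add_move : mequiv A (col_add_move A i j).
Proof. exact: rst_trans (moveO_equiv moveO_split) (pending_mequiv set0). Qed.

End ColumnAddition.

Lemma col_add_move_neq0 n (A : 'I_n -> 'I_n -> enat) i j x y :
  A j j <> Fin 0 -> A x y <> Fin 0 -> col_add_move A i j x y <> Fin 0.
Proof.
move=> Ajj; rewrite /col_add_move; case: (y =P i) => [->|//].
case: (x =P j) => [->|_] Axi; last by move: Axi; case: (A x i) => [[|a]|]; case: (A x j).
move: Ajj Axi => /elt0P + /elt0P; case: (A j j) => [b|]; case: (A j i) => [a|] //= hb ha.
by apply/elt0P => /=; lia.
Qed.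

Theorem lemma7p2 (n : nat) (A : 'I_n -> 'I_n -> enat)
  (hdiag : forall k : 'I_n, A k k <> Fin 0)
  (i j : 'I_n) (hij : i != j) (hji : A j i <> Fin 0) :
  let A' := col_add_move A i j in
  mequiv A A' /\
  (forall k : 'I_n, A' k k <> Fin 0) /\
  (irreducible A -> irreducible A') /\
  (forall (m : nat) (hm : (m <= n)%N),
      irreducible (corner hm A) -> irreducible (corner hm A')).
Proof.
move=> A'; have supp_A' x y : A x y <> Fin 0 -> A' x y <> Fin 0.
  exact: col_add_move_neq0 (hdiag j).
split; first exact: mequiv_col_add_move hij hji (hdiag j).
split; first by move=> k; apply/supp_A'/hdiag.
split; first exact: strongly_connected_mono.
by move=> m hm; apply: strongly_connected_mono => x y; apply: supp_A'.
Qed.
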